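(* Let $P=(Q,I,M,\Delta)$ be a broadcast protocol, $F\subseteq Q$, and $S$ the set of states returned by the saturation algorithm on $P$. If $F\cap S\neq\emptyset$, then there exists a lossy execution $\rho$ covering $F$ with at most $2|Q|$ nodes and length at most $2|Q|^2$.
   Context: A broadcast protocol is a tuple $P=(Q,I,M,\Delta)$ where $Q$ is a finite set of states, $I\subseteq Q$ initial states, $M$ a finite message alphabet and $\Delta\subseteq Q\times\{!!m,\ ??m \mid m\in M\}\times Q$ ($!!m$ = broadcast, $??m$ = reception). Protocols are complete for receptions: for every $q$, $m$ there is $q'$ with $(q,??m,q')\in\Delta$. A configuration is a finite undirected graph $\gamma=(V,E,L)$, $E$ symmetric irreflexive, $L:V\to Q$; $L(\gamma)=L(V)$; $\gamma$ is initial if $L(V)\subseteq I$. A lossy step goes from $\gamma=(V,E,L)$ to $\gamma'=(V,E,L')$ (same nodes and edges) if there exist a node $v$ and $m\in M$ with $(L(v),!!m,L'(v))\in\Delta$ and either (a) $L'(v')=L(v')$ for all $v'\neq v$ (lost broadcast), or (b) for every $v'\neq v$: if $v'$ is a neighbour of $v$ then $(L(v'),??m,L'(v'))\in\Delta$, otherwise $L'(v')=L(v')$ (successful broadcast). A lossy execution is a sequence $\gamma_0,\dots,\gamma_r$ with $\gamma_0$ initial and consecutive lossy steps; its number of nodes is $|V|$, its length is $r$, and it covers $F$ if $L(\gamma_r)\cap F\neq\emptyset$. The saturation algorithm: start with $S:=I$, $c:=|I|$; repeat: if there is $(q_1,!!m,q_2)\in\Delta$ with $q_1\in S$, $q_2\notin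 S$, add $q_2$ to $S$ and $c:=c+1$; else if there are $(q_1,!!m,q_2),(q_1',??m,q_2')\in\Delta$ with $q_1,q_2,q_1'\in S$, $q_2'\notin S$, add $q_2'$ and $c:=c+2$; else stop and return $S$. *)

From mathcomp Require Import all_boot.
Set Implicit Arguments. Unset Strict Implicit. Unset Printing Implicit Defensive.

Inductive act (M : Type) := Bcast of M | Recv of M.
Arguments Bcast {M}. Arguments Recv {M}.

(* A broadcast protocol P = (Q, I, M, Delta) is given by finite types Q, M,
   a set I : {set Q} and a transition relation Delta : Q -> act M -> Q -> bool
   ((q, a, q') \in Delta  iff  Delta q a q'). *)

Definition complete_for_receptions (Q M : Type) (Delta : Q -> act M -> Q -> bool) :=
  forall (q : Q) (m : M), exists q' : Q, Delta q (Recv m) q'.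

(* Configurations: the node set is 'I_n, the edge relation E (symmetric,
   irreflexive) is fixed along an execution, and only the labelling changes. *)
Definition simple_graph n (E : rel 'I_n) :=
  (forall u v, E u v = E v u) /\ (forall u, E u u = false).

Definition lossy_step (Q M : Type) (Delta : Q -> act M -> Q -> bool) n
    (E : rel 'I_n) (L L' : 'I_n -> Q) : Prop :=
  exists (v : 'I_n) (m : M),
    Delta (L v) (Bcast m) (L' v) /\
    ((forall v', v' != v -> L' v' = L v') \/
     (forall v', v' != v ->
        (E v v' -> Delta (L v') (Recv m) (L' v')) /\ (~~ E v v' -> L' v' = L v'))).

Definition lossy_execution (Q M : Type) (I : {pred Q})
    (Delta : Q -> act M -> Q -> bool) n (E : rel 'I_n)
    (rho : nat -> 'I_n -> Q) (r : nat) : Prop :=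
  simple_graph E /\
  (forall v, rho 0 v \in I) /\
  (forall i, i < r -> lossy_step Delta E (rho i) (rho i.+1)).

Definition covers (Q : Type) n (L : 'I_n -> Q) (F : {pred Q}) :=
  exists v : 'I_n, L v \in F.

(* One iteration of the saturation algorithm (counter c omitted, it does not
   influence the returned set). *)
Definition sat_step (Q M : finType) (Delta : Q -> act M -> Q -> bool)
    (S : {set Q}) : {set Q} :=
  match [pick q2 | (q2 \notin S) &&
           [exists q1, exists m, (q1 \in S) && Delta q1 (Bcast m) q2]] with
  | Some q2 => q2 |: S
  | None =>
    match [pick q2' | (q2' \notin S) &&
             [exists q1, exists q2, exists q1', exists m,
                [&& q1 \in S, q2 \in S, q1' \in S,
                    Delta q1 (Bcast m) q2 & Delta q1' (Recv m) q2']]] with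
    | Some q2' => q2' |: S
    | None => S
    end
  end.

(* Each non-final iteration adds a new state, so the algorithm stops after at
   most #|Q| iterations; iterating further leaves S unchanged. *)
Definition saturation (Q M : finType) (I : {set Q})
    (Delta : Q -> act M -> Q -> bool) : {set Q} :=
  iter #|Q| (sat_step Delta) I.

From mathcomp Require Import all_boot.
Set Implicit Arguments. Unset Strict Implicit. Unset Printing Implicit Defensive.

(* The saturation algorithm adds the states of S one at a time, so every added state s has
   a level (the iteration adding it) and a parent of smaller level, from which s is
   obtained either by a broadcast !!m, or by a reception ??m of a message m that some
   earlier state, the sender of s, can broadcast. Following parents leads from every state
   of S down to an initial state. The graph has one node per state q, which climbs the
   parent chain of q, and one helper per state s added by a reception, which climbs the
   chain of the sender of s; the helper of s is adjacent exactly to the nodes whose chain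
   passes through s. Phase j moves every node from its ancestor of level j to its ancestor
   of level j+1: if the state s of level j+1 was added by a broadcast, the nodes concerned
   broadcast one after the other while the messages are lost; otherwise the helper of s
   broadcasts once and they all receive. This gives |Q| phases of at most 2|Q| steps on
   2|Q| nodes. *)

Section LossyReach.
Variables (Q M : Type) (Delta : Q -> act M -> Q -> bool) (V : finType) (E : rel V).

Definition lossy_move (L L' : V -> Q) := exists (v : V) (m : M),
  Delta (L v) (Bcast m) (L' v) /\
  ((forall v', v' != v -> L' v' = L v') \/
   (forall v', v' != v ->
      (E v v' -> Delta (L v') (Recv m) (L' v')) /\ (~~ E v v' -> L' v' = L v'))).

Inductive lossy_reach (L : V -> Q) : (V -> Q) -> nat -> Prop :=
| lossy_reach0 : lossy_reach L L 0
| lossy_reachS L1 L2 k : lossy_reach L L1 k -> lossy_move L1 L2 -> lossy_reach L L2 k.+1.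

Lemma lossy_reach_trans L L1 L2 k1 k2 :
  lossy_reach L L1 k1 -> lossy_reach L1 L2 k2 -> lossy_reach L L2 (k1 + k2).
Proof.
move=> r1; elim=> [|L3 L4 k _ r3 step]; first by rewrite addn0.
by rewrite addnS; apply: lossy_reachS r3 step.
Qed.

Lemma lossy_reach_path L L' k : lossy_reach L L' k ->
  exists rho : nat -> V -> Q,
    [/\ rho 0 = L, rho k = L' & forall i, i < k -> lossy_move (rho i) (rho i.+1)].
Proof.
elim=> [|L1 L2 k' _ [rho [rho0 rhok steps]] step]; first by exists (fun=> L).
exists (fun i => if i <= k' then rho i else L2); split; rewrite ?ltnn //.
move=> i; rewrite ltnS; case: ltngtP => // [ik|->] _; [exact: steps | by rewrite rhok].
Qed.

Lemma lossy_reach_broadcasts (zs : seq V) s m L : uniq zs ->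
  {in zs, forall z, Delta (L z) (Bcast m) s} ->
  lossy_reach L (fun z => if z \in zs then s else L z) (size zs).
Proof.
elim: zs => [|z zs IH] /=; first by move=> _ _; apply: lossy_reach0.
case/andP=> zNzs uzs Bzs; apply: lossy_reachS (IH uzs _) _.
  by move=> z' z'zs; apply: Bzs; rewrite inE z'zs orbT.
exists z, m; rewrite inE eqxx (negbTE zNzs); split; first by apply: Bzs; rewrite inE eqxx.
by left=> v' /negbTE; rewrite inE => ->.
Qed.

End LossyReach.

Arguments lossy_reach0 {Q M Delta V E L}.
Arguments lossy_reach_broadcasts {Q M Delta V E zs s m L}.

Lemma lossy_move_bij (Q M : Type) (Delta : Q -> act M -> Q -> bool) (W V : finType)
    (E : rel V) (g : W -> V) (g' : V -> W) (L L' : V -> Q) :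
  cancel g g' -> cancel g' g -> lossy_move Delta E L L' ->
  lossy_move Delta (fun a b => E (g a) (g b)) (L \o g) (L' \o g).
Proof.
move=> gK g'K [v [m [Bv moves]]]; exists (g' v), m; rewrite /= g'K; split=> //.
have gNv a : a != g' v -> g a != v by apply: contraNneq => <-; rewrite gK.
by case: moves => moves; [left | right] => a /gNv; apply: moves.
Qed.

Lemma lossy_execution_enum (Q M : Type) (I : {pred Q}) (Delta : Q -> act M -> Q -> bool)
    (V : finType) (E : rel V) (L0 L : V -> Q) (k : nat) :
  symmetric E -> irreflexive E -> (forall v, L0 v \in I) ->
  lossy_reach Delta E L0 L k ->
  exists rho : nat -> 'I_#|V| -> Q,
    lossy_execution I Delta (fun a b => E (enum_val a) (enum_val b)) rho k /\
    rho k = L \o enum_val.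
Proof.
move=> Esym Eirr L0I /lossy_reach_path [rho [rho0 rhok steps]].
exists (fun i => rho i \o enum_val); rewrite rhok; split=> //; split; [split|split] => //.
- by move=> a; rewrite /= rho0.
- by move=> i ik; apply: lossy_move_bij enum_valK enum_rankK (steps i ik).
Qed.

Section Saturation.
Variables (Q M : finType) (I : {set Q}) (Delta : Q -> act M -> Q -> bool).

Local Notation S := (saturation I Delta).

Definition satn j := iter j (sat_step Delta) I.

Lemma sat_step_sub (X : {set Q}) : X \subset sat_step Delta X.
Proof. by rewrite /sat_step; do 2?case: pickP => [q _|_]; rewrite ?subsetUr. Qed.

Lemma satn_mono i j : i <= j -> satn i \subset satn j.
Proof.
move/subnKC <-; elim: (j - i) => [|d IH]; first by rewrite addn0.
by rewrite addnS (subset_trans IH) ?sat_step_sub.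
Qed.

Definition bcast_wit (X : {set Q}) x (p : Q * M) :=
  (p.1 \in X) && Delta p.1 (Bcast p.2) x.

Definition recv_wit (X : {set Q}) x (p : Q * Q * M) :=
  [&& p.1.1 \in X, p.1.2 \in X, [exists q2, Delta p.1.1 (Bcast p.2) q2]
    & Delta p.1.2 (Recv p.2) x].

Lemma sat_step_new (X : {set Q}) x : x \in sat_step Delta X -> x \notin X ->
  sat_step Delta X = x |: X /\
  ([exists p, bcast_wit X x p] || [exists p, recv_wit X x p]).
Proof.
rewrite /sat_step; case: pickP => [q /andP [_ Bq]|_].
  case/setU1P=> [->|xX]; last by rewrite xX.
  case/existsP: Bq => q1 /existsP [m /andP [q1X B]] _; split=> //.
  by apply/orP; left; apply/existsP; exists (q1, m); rewrite /bcast_wit q1X.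
case: pickP => [q /andP [_ Rq]|_]; last by move=> ->.
case/setU1P=> [->|xX]; last by rewrite xX.
case/existsP: Rq => q1 /existsP [q2 /existsP [q1' /existsP [m]]].
case/and5P=> q1X _ q1'X B R _; split=> //; apply/orP; right; apply/existsP.
by exists (q1, q1', m); rewrite /recv_wit /= q1X q1'X R andbT; apply/existsP; exists q2.
Qed.

Definition lvl x := find (fun j => x \in satn j) (iota 0 #|Q|.+1).

Lemma lvl_min x j : x \in satn j -> lvl x <= j.
Proof.
move=> xj; rewrite leqNgt; apply/negP => jlt.
have := before_find 0 jlt; rewrite nth_iota ?add0n ?xj //.
by apply: leq_trans jlt _; rewrite -[X in _ <= X](size_iota 0) find_size.
Qed.

Lemma lvl_sat x : x \in S -> lvl x <= #|Q|.
Proof. exact: lvl_min. Qed.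

Lemma mem_satnE x j : x \in S -> (x \in satn j) = (lvl x <= j).
Proof.
move=> xS; apply/idP/idP => [/lvl_min //|le]; apply: subsetP (satn_mono le) _ _.
have hasx : has (fun j => x \in satn j) (iota 0 #|Q|.+1).
  by apply/hasP; exists #|Q|; [rewrite mem_iota add0n ltnSn | exact: xS].
by have := nth_find 0 hasx; rewrite nth_iota ?add0n // ltnS lvl_sat.
Qed.

Lemma lvlS_new x j : x \in S -> lvl x = j.+1 ->
  satn j.+1 = x |: satn j /\
  ([exists p, bcast_wit (satn j) x p] || [exists p, recv_wit (satn j) x p]).
Proof.
move=> xS lx; apply: sat_step_new; last by rewrite mem_satnE // lx ltnn.
by rewrite -[sat_step _ _]/(satn j.+1) mem_satnE // lx.
Qed.

Lemma lvlS_inj x y j : x \in S -> y \in S -> lvl x = j.+1 -> lvl y = j.+1 -> x = y.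
Proof.
move=> xS yS lx ly; have [satnS _] := lvlS_new xS lx.
have /[!satnS] /setU1P [//|] : y \in satn j.+1 by rewrite mem_satnE // ly.
by rewrite mem_satnE // ly ltnn.
Qed.

Lemma satn_prev_lt x y : x \in S -> 0 < lvl x -> y \in satn (lvl x).-1 ->
  y \in S /\ lvl y < lvl x.
Proof.
move=> xS lx yprev; rewrite -(prednK lx) ltnS lvl_min //; split=> //.
by apply: subsetP yprev; apply: satn_mono; rewrite (leq_trans (leq_pred _)) ?lvl_sat.
Qed.

Definition recv_cert x : option (Q * Q * M) :=
  if (x \in S) && (0 < lvl x) then [pick p | recv_wit (satn (lvl x).-1) x p] else None.

Definition parent x :=
  if recv_cert x is Some p then p.1.2
  else if [pick p | bcast_wit (satn (lvl x).-1) x p] is Some p then p.1 else x.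

Lemma recv_certP x p : recv_cert x = Some p ->
  [/\ x \in S, 0 < lvl x & recv_wit (satn (lvl x).-1) x p].
Proof. by rewrite /recv_cert; case: andP => // [[xS lx]]; case: pickP => // q ? [<-]. Qed.

Lemma parentP x : x \in S -> 0 < lvl x ->
  parent x \in satn (lvl x).-1 /\
  (recv_cert x = None -> exists m, Delta (parent x) (Bcast m) x).
Proof.
move=> xS lx; rewrite /parent; case rx: (recv_cert x) => [p|].
  by have [_ _ /and4P []] := recv_certP rx.
case: pickP => [p /andP [? ?]|noB]; first by split=> //; exists p.2.
have [_] := lvlS_new xS (esym (prednK lx)).
case/orP=> /existsP [p wp]; first by have := noB p; rewrite wp.
by move: rx; rewrite /recv_cert xS lx; case: pickP => // /(_ p); rewrite wp.
Qed.

Lemma recv_cert_sender x p : recv_cert x = Some p -> p.1.1 \in S /\ lvl p.1.1 < lvl x.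
Proof. by case/recv_certP=> xS lx /and4P [sender _ _ _]; apply: satn_prev_lt sender. Qed.

Lemma parent_lt x : x \in S -> 0 < lvl x -> parent x \in S /\ lvl (parent x) < lvl x.
Proof. by move=> xS lx; apply: satn_prev_lt => //; case: (parentP xS lx). Qed.

Definition lower j t := if lvl t <= j then t else parent t.

(* |Q| iterations suffice since levels decrease strictly along parents. *)
Definition anc t j := iter #|Q| (lower j) t.

Lemma lower_id j t : lvl t <= j -> lower j t = t.
Proof. by rewrite /lower => ->. Qed.

Lemma lower_parent j t : j < lvl t -> lower j t = parent t.
Proof. by move=> jt; rewrite /lower leqNgt jt. Qed.

Lemma iter_lower j k t : t \in S -> lvl t <= j + k ->
  iter k (lower j) t \in S /\ lvl (iter k (lower j) t) <= j.
Proof.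
elim: k t => [|k IH] t tS; first by rewrite addn0.
rewrite iterSr; case: (leqP (lvl t) j) => [tj _|jt tk].
  by rewrite lower_id // iter_fix // lower_id.
have [pS plt] := parent_lt tS (leq_ltn_trans (leq0n j) jt).
by rewrite lower_parent //; apply: IH; rewrite // -ltnS -addnS (leq_trans plt).
Qed.

Lemma anc_sat t j : t \in S -> anc t j \in S /\ lvl (anc t j) <= j.
Proof. by move=> tS; apply: iter_lower; rewrite // (leq_trans (lvl_sat tS)) ?leq_addl. Qed.

Lemma anc_id t j : lvl t <= j -> anc t j = t.
Proof. by move=> tj; apply/iter_fix/lower_id. Qed.

Lemma anc0_I t : t \in S -> anc t 0 \in I.
Proof. by move=> tS; have [aS a0] := anc_sat 0 tS; rewrite -[I]/(satn 0) mem_satnE. Qed.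

Lemma iter_lowerS j k t : t \in S ->
  iter k.+1 (lower j) t = lower j (iter k (lower j.+1) t).
Proof.
elim: k t => [|k IH] t tS //; rewrite iterSr [in RHS]iterSr.
case: (leqP (lvl t) j.+1) => [tj|jt].
  have tj1 : lvl t <= j + 1 by rewrite addn1.
  have [_ lj] := iter_lower tS tj1.
  by rewrite (lower_id tj) (iter_fix _ (lower_id tj)) iter_fix // lower_id.
have [pS _] := parent_lt tS (leq_ltn_trans (leq0n _) jt).
by rewrite (lower_parent (ltnW jt)) (lower_parent jt) IH.
Qed.

Lemma anc_pred t j : t \in S -> anc t j = lower j (anc t j.+1).
Proof.
move=> tS; rewrite /anc -iter_lowerS // iterS lower_id //.
by case: (anc_sat j tS).
Qed.

Lemma anc_predS t s j : t \in S -> s \in S -> lvl s = j.+1 ->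
  anc t j = if anc t j.+1 == s then parent s else anc t j.+1.
Proof.
move=> tS sS ls; have [aS al] := anc_sat j.+1 tS; rewrite anc_pred //.
case: eqP => [->|neq]; first by rewrite lower_parent // ls.
rewrite lower_id //; move: al; rewrite leq_eqVlt => /orP [/eqP la|//].
by case: neq; apply: lvlS_inj la ls.
Qed.

Lemma anc_pred_idle t j : t \in S -> (forall s, s \in S -> lvl s != j.+1) ->
  anc t j = anc t j.+1.
Proof.
move=> tS none; have [aS al] := anc_sat j.+1 tS; rewrite anc_pred // lower_id //.
by move: al; rewrite leq_eqVlt (negbTE (none _ aS)).
Qed.

Section Schedule.
Variable i0 : Q.
Hypothesis i0I : i0 \in I.
Hypothesis complete : complete_for_receptions Delta.

(* [inl q] ends at q (or stays at [i0] if q is not in S); [inr s] is the helper of s. *)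
Definition node := (Q + Q)%type.

Definition target (z : node) : Q :=
  match z with
  | inl q => if q \in S then q else i0
  | inr s => if recv_cert s is Some p then p.1.1 else i0
  end.

(* After its broadcast in phase [lvl s], the helper of s is left in an arbitrary state. *)
Definition live j (z : node) := if z is inr s then j < lvl s else true.

Definition hears (u z : node) :=
  if u is inr s then (recv_cert s != None) && (anc (target z) (lvl s) == s) else false.

Definition edge : rel node := fun u z => hears u z || hears z u.

Definition tracking j (L : node -> Q) := forall z, live j z -> L z = anc (target z) j.

Lemma card_node : #|{: node}| = 2 * #|Q|.
Proof. by rewrite card_sum addnn mul2n. Qed.

Lemma target_sat z : target z \in S.
Proof.
have i0S : i0 \in S by apply: subsetP (satn_mono (leq0n _)) _ i0I.
case: z => [q|s] /=; first by case: ifP.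
by case rs: (recv_cert s) => [p|] //; case: (recv_cert_sender rs).
Qed.

Lemma live_pred j z : live j.+1 z -> live j z.
Proof. by case: z => //= s /ltnW. Qed.

Lemma hears_lvl s z : hears (inr s) z -> lvl s <= lvl (target z).
Proof.
case/andP=> _ /eqP ancs; rewrite leqNgt; apply/negP => tlt.
by move: ancs; rewrite (anc_id (ltnW tlt)) => ts; rewrite ts ltnn in tlt.
Qed.

Lemma edge_sym : symmetric edge.
Proof. by move=> u z; rewrite /edge orbC. Qed.

Lemma edge_irr : irreflexive edge.
Proof.
move=> z; rewrite /edge orbb; apply/negbTE/negP; case: z => [//|s] hs.
case rs: (recv_cert s) hs => [p|] hs; last by case/andP: hs; rewrite rs.
have [_ plt] := recv_cert_sender rs.
by move: (hears_lvl hs); rewrite /= rs leqNgt plt.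
Qed.

Section Stage.
Variables (j : nat) (s : Q) (L : node -> Q).
Hypotheses (sS : s \in S) (ls : lvl s = j.+1) (trL : tracking j L).

Lemma anc_target_pred z :
  anc (target z) j = if anc (target z) j.+1 == s then parent s else anc (target z) j.+1.
Proof. exact: anc_predS (target_sat z) sS ls. Qed.

Lemma stage_bcast m : Delta (parent s) (Bcast m) s ->
  exists L' k, [/\ lossy_reach Delta edge L L' k, k <= #|{: node}| & tracking j.+1 L'].
Proof.
move=> Bs; pose A := [set z | live j z & anc (target z) j.+1 == s].
exists (fun z => if z \in enum A then s else L z), #|A|; split.
- rewrite cardE; apply: (lossy_reach_broadcasts (m := m) (enum_uniq A)) => z.
  by rewrite mem_enum inE => /andP [lz /eqP az]; rewrite trL // anc_target_pred az eqxx.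
- exact: max_card.
move=> z lz; rewrite mem_enum inE (live_pred lz) /=.
by case: eqP => [//|/eqP ns]; rewrite (trL (live_pred lz)) anc_target_pred (negbTE ns).
Qed.

Lemma stage_recv q1 q1' m : recv_cert s = Some (q1, q1', m) ->
  exists L' k, [/\ lossy_reach Delta edge L L' k, k <= #|{: node}| & tracking j.+1 L'].
Proof.
move=> rs; have [_ _ /and4P [_ _ /existsP [q2 Bq2] Rs]] := recv_certP rs.
(* Neighbours of the helper that are no longer tracked must still receive m somehow. *)
have [rcv rcvP] := fin_all_exists (fun q => complete q m).
pose v : node := inr s.
have tv : target v = q1 by rewrite /= rs.
have [_ lq1] := recv_cert_sender rs; rewrite /= ls ltnS in lq1.
have audience z : live j z -> edge v z -> anc (target z) j.+1 == s.
  move=> lz /orP [/andP [_]|]; first by rewrite ls.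
  case: z lz => [//|s' ls' /hears_lvl]; rewrite tv => /(leq_trans ls').
  by rewrite ltnNge lq1.
pose L' z :=
  if z == v then q2 else if edge v z then (if live j z then s else rcv (L z)) else L z.
exists L', 1; split.
- apply: lossy_reachS lossy_reach0 _; exists v, m; split.
    by rewrite /L' eqxx trL ?tv ?(anc_id lq1) //= ls.
  right=> z zv; rewrite /L' (negbTE zv); split=> [ez|/negbTE -> //].
  rewrite ez; case: ifP => [lz|_ //]; rewrite trL // anc_target_pred audience //.
  by rewrite /parent rs.
- by apply/card_gt0P; exists v.
move=> z lz; rewrite /L'; case: eqP => [zv|_]; first by rewrite zv /= ls ltnn in lz.
have lz' := live_pred lz.
case: ifP => [ez|nez]; first by rewrite lz'; apply/esym/eqP/audience.
rewrite (trL lz') anc_target_pred; case: eqP => // az.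
by move: nez; rewrite /edge /= rs ls az eqxx.
Qed.

End Stage.

Lemma stage_idle j L : (forall s, s \in S -> lvl s != j.+1) ->
  tracking j L -> tracking j.+1 L.
Proof.
by move=> none trL z lz; rewrite (trL _ (live_pred lz)) anc_pred_idle ?target_sat.
Qed.

Lemma stage j L : tracking j L ->
  exists L' k, [/\ lossy_reach Delta edge L L' k, k <= #|{: node}| & tracking j.+1 L'].
Proof.
move=> trL; case: (pickP [pred s | (s \in S) && (lvl s == j.+1)]).
  move=> s /andP [sS /eqP ls].
  case rs: (recv_cert s) => [[[q1 q1'] m]|]; first exact: stage_recv rs.
  have lpos : 0 < lvl s by rewrite ls.
  have [_ /(_ rs) [m Bs]] := parentP sS lpos.
  exact: stage_bcast Bs.
move=> none; exists L, 0; split=> //; first exact: lossy_reach0.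
apply: stage_idle trL => s sS; apply/negP => /eqP ls.
by have := none s; rewrite /= sS ls eqxx.
Qed.

Definition init (z : node) := anc (target z) 0.

Lemma init_I z : init z \in I.
Proof. exact/anc0_I/target_sat. Qed.

Lemma schedule j : exists L k,
  [/\ lossy_reach Delta edge init L k, k <= j * #|{: node}| & tracking j L].
Proof.
elim: j => [|j [L [k [reachL kj trL]]]]; first by exists init, 0; split=> //; exact: lossy_reach0.
have [L' [k' [reachL' k'le trL']]] := stage trL.
exists L', (k + k'); split=> //; first exact: lossy_reach_trans reachL reachL'.
by rewrite mulSn addnC leq_add.
Qed.

End Schedule.

End Saturation.

Theorem theorem3p5 (Q M : finType) (I : {set Q})
    (Delta : Q -> act M -> Q -> bool) (F : {set Q}) :
  complete_for_receptions Delta ->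
  F :&: saturation I Delta != set0 ->
  exists (n : nat) (E : rel 'I_n) (rho : nat -> 'I_n -> Q) (r : nat),
    [/\ lossy_execution (mem I) Delta E rho r,
        covers (rho r) (mem F),
        n <= 2 * #|Q| &
        r <= 2 * #|Q| ^ 2].
Proof.
move=> complete /set0Pn [f /setIP [Ff fS]].
set i0 := anc I Delta f 0; have i0I : i0 \in I := anc0_I fS.
have [L [k [reachL k_le trL]]] := schedule i0I complete #|Q|.
have [rho [exec rhok]] :=
  lossy_execution_enum (edge_sym I Delta i0) (edge_irr I Delta i0) (init_I _ i0I) reachL.
exists _, (fun a b => edge I Delta i0 (enum_val a) (enum_val b)), rho, k; split=> //.
- exists (enum_rank (inl f : node Q)); rewrite rhok /= enum_rankK trL //= fS anc_id //.
  exact: lvl_sat.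
- by rewrite card_node.
- by rewrite -mulnn mulnA -card_node mulnC.
Qed.
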